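(* Let $G$ be a graph with a perfect ordering $\{B_1,\dots,B_k\}$ of its prime components, and let $f:\mathbb{R}\to\mathbb{R}$ satisfy $f(0)=0$. Define $s:=\max_{i}|S_i|$, where $S_i:=(B_1\cup\dots\cup B_{i-1})\cap B_i$. If $f[-]$ preserves positivity on $\mathcal{P}_{G_{B_i}}$ for all $1\le i\le k$ and is Loewner super-additive on $\mathcal{P}_{K_s}$, then $f[-]$ preserves positivity on $\mathcal{P}_G$.
   Context: Graphs are finite and simple; $G_U$ is the subgraph induced on $U$; $K_s$ is the complete graph on $s$ vertices. A decomposition of $G=(V,E)$ is a partition $(A,C,B)$ of $V$ with $A,B$ nonempty such that every path from $A$ to $B$ meets $C$ and $G_C$ is complete; $G$ is prime if it admits no decomposition. Decomposing $G$ into $G_{A\cup C}$ and $G_{B\cup C}$ and iterating until no further decomposition is possible yields the prime components of $G$ (vertex subsets inducing prime graphs). For subsets $B_1,\dots,B_k$, with $H_j=B_1\cup\dots\cup B_j$, $H_0=\emptyset$, $S_j=H_{j-1}\cap B_j$, the sequence is a perfect ordering if for every $1<i\le k$ there is $j<i$ with $S_i\subset B_j$, and each $S_i$ induces a complete graph. For a graph $H$ on $\{1,\dots,n\}$, $\mathcal{P}_H$ is the set of real symmetric PSD $n\times n$ matrices $M$ with $m_{ij}=0$ for $i\ne j$ non-adjacent. $f[M]:=(f(m_{ij}))$; $f[-]$ preserves positivity on $\mathcal{P}_H$ if $f[M]\in\mathcal{P}_H$ for all $M\in\mathcal{P}_H$; it is Loewner super-additive on $\mathcal{P}_H$ if $f[M+N]-f[M]-f[N]\in\mathcal{P}_H$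 for all $M,N\in\mathcal{P}_H$. *)

From HB Require Import structures.
From mathcomp Require Import all_boot all_order all_algebra.
From mathcomp Require Import reals.
Set Implicit Arguments. Unset Strict Implicit. Unset Printing Implicit Defensive.
Import Order.TTheory GRing.Theory Num.Theory.
Local Open Scope ring_scope.

Section Graphs.
Variable n : nat.
(* A graph on {0,..,n-1}, given by its adjacency relation [e]
   (simplicity = symmetry + irreflexivity is assumed in the theorem). *)
Variable e : rel 'I_n.

Definition separates (W A B C : {set 'I_n}) : Prop :=
  forall (x : 'I_n) (p : seq 'I_n),
    x \in A -> last x p \in B -> path e x p -> all (mem W) (x :: p) ->
    has (mem C) (x :: p).

Definition is_clique (C : {set 'I_n}) : Prop :=
  forall x y, x \in C -> y \in C -> x != y -> e x y.

Definition decomposition (W A C B : {set 'I_n}) : Prop :=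
  [/\ A :|: C :|: B = W,
      A :&: C = set0 /\ A :&: B = set0 /\ C :&: B = set0,
      A != set0, B != set0 &
      separates W A B C /\ is_clique C].

Definition prime_graph (W : {set 'I_n}) : Prop :=
  ~ exists A C B, decomposition W A C B.

Inductive prime_comps : {set 'I_n} -> {set {set 'I_n}} -> Prop :=
| pc_prime W : prime_graph W -> prime_comps W [set W]
| pc_dec W A C B P1 P2 : decomposition W A C B ->
    prime_comps (A :|: C) P1 -> prime_comps (B :|: C) P2 ->
    prime_comps W (P1 :|: P2).

(* H_j = B_1 u ... u B_j  (0-indexed: union of the first j sets) *)
Definition Hset (Bs : seq {set 'I_n}) (j : nat) : {set 'I_n} :=
  \bigcup_(i < j) nth set0 Bs i.

(* S_i = H_{i-1} n B_i  (0-indexed: S i = (B_0 u .. u B_{i-1}) n B_i) *)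
Definition Sset (Bs : seq {set 'I_n}) (i : nat) : {set 'I_n} :=
  Hset Bs i :&: nth set0 Bs i.

Definition perfect_ordering (Bs : seq {set 'I_n}) : Prop :=
  (forall i, 0 < i < size Bs -> exists2 j, j < i & Sset Bs i \subset nth set0 Bs j)%N
  /\ (forall i, i < size Bs -> is_clique (Sset Bs i))%N.

End Graphs.

(* induced subgraph G_U, with vertex set relabelled as 'I_#|U| via enum_val *)
Definition induced n (e : rel 'I_n) (U : {set 'I_n}) : rel 'I_#|U| :=
  fun a b => e (enum_val a) (enum_val b).

Arguments induced {n} e U _ _ : assert.

Definition complete_graph (s : nat) : rel 'I_s := fun a b => a != b.

Arguments complete_graph : clear implicits.

Section Matrices.
Variable R : realType.

Definition psd m (M : 'M[R]_m) : Prop :=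
  M^T = M /\ forall x : 'cV[R]_m, 0 <= (x^T *m M *m x) 0 0.

Definition in_PH m (H : rel 'I_m) (M : 'M[R]_m) : Prop :=
  psd M /\ forall i j, i != j -> ~~ H i j -> M i j = 0.

Definition entrywise (f : R -> R) m (M : 'M[R]_m) : 'M[R]_m := map_mx f M.

Definition preserves_positivity (f : R -> R) m (H : rel 'I_m) : Prop :=
  forall M, in_PH H M -> in_PH H (entrywise f M).

Definition loewner_superadditive (f : R -> R) m (H : rel 'I_m) : Prop :=
  forall M N, in_PH H M -> in_PH H N ->
    in_PH H (entrywise f (M + N) - entrywise f M - entrywise f N).
End Matrices.
Arguments preserves_positivity {R} f {m} H.
Arguments loewner_superadditive {R} f {m} H.

From HB Require Import structures.
From mathcomp Require Import all_boot all_order all_algebra.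
From mathcomp Require Import reals ring lra.
Set Implicit Arguments. Unset Strict Implicit. Unset Printing Implicit Defensive.
Import Order.TTheory GRing.Theory Num.Theory.
Local Open Scope ring_scope.

(* Induction along the perfect ordering.  Let N be a PSD matrix with the
   zero pattern of G supported on H_(j+1) = H_j u B_j.  The vertices of
   B_j \ H_j are adjacent only to vertices of B_j, so eliminating them one at
   a time by rank-one Schur complements splits N = M1 + M2 with M1 PSD, of
   pattern G and supported on H_j, and M2 PSD, of pattern G and supported on
   B_j.  Then f[N] = f[M1] + f[M2] + (f[M1 + M2] - f[M1] - f[M2]): the first
   term is PSD by induction, the second because f preserves positivity on
   G_(B_j), and the third, which vanishes outside the clique S_j = H_j n B_j
   since f(0) = 0, by super-additivity on K_s. *)

Section PSD.
Variables (R : realType) (n : nat).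
Implicit Types (M N : 'M[R]_n) (u v w : 'cV[R]_n).

Definition bform M u v : R := (u^T *m M *m v) 0 0.

Lemma bformDl M u v w : bform M (u + v) w = bform M u w + bform M v w.
Proof. by rewrite /bform linearD /= !mulmxDl mxE. Qed.

Lemma bformDr M u v w : bform M u (v + w) = bform M u v + bform M u w.
Proof. by rewrite /bform !mulmxDr mxE. Qed.

Lemma bformZl M a u v : bform M (a *: u) v = a * bform M u v.
Proof. by rewrite /bform linearZ /= -!scalemxAl mxE. Qed.

Lemma bformZr M a u v : bform M u (a *: v) = a * bform M u v.
Proof. by rewrite /bform -!scalemxAr mxE. Qed.

Lemma bformBM M N u v : bform (M - N) u v = bform M u v - bform N u v.
Proof. by rewrite /bform mulmxBr mulmxBl !mxE. Qed.

Lemma bformC M u v : M^T = M -> bform M u v = bform M v u.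
Proof.
move=> tM; rewrite /bform.
transitivity ((u^T *m M *m v)^T 0 0); first by rewrite [in RHS]mxE.
by rewrite !trmx_mul trmxK tM mulmxA.
Qed.

Lemma bform_delta M i j : bform M (delta_mx i 0) (delta_mx j 0) = M i j.
Proof. by rewrite /bform trmx_delta -rowE -colE !mxE. Qed.

Lemma bform_deltaDZ M i j t :
  bform M (delta_mx i 0 + t *: delta_mx j 0) (delta_mx i 0 + t *: delta_mx j 0)
  = M i i + t * (M i j + M j i) + t ^+ 2 * M j j.
Proof. by rewrite !bformDl !bformDr !bformZl !bformZr !bform_delta; ring. Qed.

Lemma psd0 : psd (0 : 'M[R]_n).
Proof. by split=> [|x]; rewrite ?trmx0 // mulmx0 mul0mx mxE. Qed.

Lemma psdD M N : psd M -> psd N -> psd (M + N).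
Proof.
move=> [tM pM] [tN pN]; split=> [|x]; first by rewrite linearD /= tM tN.
by rewrite mulmxDr mulmxDl mxE addr_ge0.
Qed.

Lemma psd_sym M i j : psd M -> M i j = M j i.
Proof. by case=> tM _; rewrite -[in LHS]tM mxE. Qed.

Lemma psd_diag_ge0 M i : psd M -> 0 <= M i i.
Proof. by case=> _ pM; rewrite -bform_delta; apply: pM. Qed.

(* Test against [e_i + t e_y], with [t] chosen so that the form equals [-1]. *)
Lemma psd_diag0_col0 M i y : psd M -> M y y = 0 -> M i y = 0.
Proof.
move=> hM Myy0; apply/eqP/negP => /negP Miy0.
have Mii_ge0 := psd_diag_ge0 i hM.
have := hM.2 (delta_mx i 0 + (- (M i i + 1) / (2 * M i y)) *: delta_mx y 0).
rewrite -/(bform _ _ _) bform_deltaDZ Myy0 (psd_sym y i hM) mulr0 addr0.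
have -> : - (M i i + 1) / (2 * M i y) * (M i y + M i y) = - (M i i + 1).
  by field.
lra.
Qed.

Lemma psd_congr k M (Q : 'M[R]_(n, k)) : psd M -> psd (Q^T *m M *m Q).
Proof.
move=> [tM pM]; split=> [|x]; first by rewrite !trmx_mul trmxK tM mulmxA.
suff -> : x^T *m (Q^T *m M *m Q) *m x = (Q *m x)^T *m M *m (Q *m x) by apply: pM.
by rewrite trmx_mul !mulmxA.
Qed.
End PSD.

Section Schur.
Variables (R : realType) (n : nat).
Implicit Types M : 'M[R]_n.

Definition schur_term M y : 'M[R]_n := (M y y)^-1 *: (col y M *m (col y M)^T).

Lemma schur_termE M y i j : schur_term M y i j = (M y y)^-1 * (M i y * M j y).
Proof. by rewrite !mxE big_ord1 !mxE. Qed.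

Lemma bform_schur_term M y u : M^T = M ->
  bform (schur_term M y) u u = (M y y)^-1 * bform M u (delta_mx y 0) ^+ 2.
Proof.
move=> tM; rewrite /bform -scalemxAr -scalemxAl mulmxA.
rewrite -[u^T *m _ *m _ *m u]mulmxA [in LHS]mxE [in LHS]mxE big_ord1 expr2.
congr (_ * (_ * _)).
  by rewrite colE mulmxA.
by rewrite colE trmx_mul tM -/(bform M _ _) bformC.
Qed.

Lemma psd_schur_term M y : psd M -> psd (schur_term M y).
Proof.
move=> hM; split=> [|u]; first by rewrite linearZ /= trmx_mul trmxK.
rewrite -/(bform _ u u) bform_schur_term ?hM.1 //.
by rewrite mulr_ge0 ?sqr_ge0 // invr_ge0 psd_diag_ge0.
Qed.

(* Test against [u + t e_y], where [t] minimizes the form along [e_y]. *)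
Lemma psd_sub_schur_term M y : psd M -> psd (M - schur_term M y).
Proof.
move=> hM; have [tM pM] := hM.
split=> [|u]; first by rewrite linearD linearN /= tM (psd_schur_term y hM).1.
rewrite -/(bform _ u u) bformBM bform_schur_term //.
have [->|Myy0] := eqVneq (M y y) 0; first by rewrite invr0 mul0r subr0; apply: pM.
set b := bform M u (delta_mx y 0); set t := - (b / M y y).
have := pM (u + t *: delta_mx y 0).
rewrite -/(bform M _ _) !bformDl !bformDr !bformZl !bformZr bform_delta.
rewrite (bformC (delta_mx y 0) u tM) -/b.
suff -> : bform M u u + t * b + (t * b + t * (t * M y y)) =
          bform M u u - (M y y)^-1 * b ^+ 2 by [].
by rewrite /t; field.
Qed.

Lemma sub_schur_term_col0 M y i : psd M -> (M - schur_term M y) i y = 0.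
Proof.
move=> hM; rewrite [LHS]mxE [X in _ + X]mxE schur_termE.
have [Myy0|Myy0] := eqVneq (M y y) 0; last by rewrite mulrCA mulVf // mulr1 subrr.
by rewrite (psd_diag0_col0 i hM Myy0) mul0r mulr0 subr0.
Qed.
End Schur.

Section Split.
Variables (R : realType) (n : nat).

Lemma psd_split (Y Z : {set 'I_n}) (M : 'M[R]_n) :
  Y \subset Z -> psd M -> (forall i y, y \in Y -> i \notin Z -> M i y = 0) ->
  exists M1, exists M2, [/\ psd M1, psd M2, M = M1 + M2,
    forall i y, y \in Y -> M1 i y = 0 & forall i j, i \notin Z -> M2 i j = 0].
Proof.
move Yk : #|Y| => k; elim: k Y M Yk => [|k IH] Y M Yk YZ hM MYZ.
  exists M, 0; split; rewrite ?addr0 //; first exact: psd0.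
    by move=> i y; rewrite (cards0_eq Yk) inE.
  by move=> i j; rewrite mxE.
have [y yY] : exists y, y \in Y by apply/card_gt0P; rewrite Yk.
have Yk' : #|Y :\ y| = k by move: Yk; rewrite (cardsD1 y) yY add1n => -[].
have YZ' : Y :\ y \subset Z := subset_trans (subD1set Y y) YZ.
have schur0 i j : i \notin Z -> schur_term M y i j = 0.
  by move=> iZ; rewrite schur_termE (MYZ i y) // mul0r mulr0.
have [|M1 [M2 [hM1 hM2 defM M1Y M2Z]]] :=
  IH (Y :\ y) (M - schur_term M y) Yk' YZ' (psd_sub_schur_term y hM).
  move=> i y' /setD1P [_ y'Y] iZ.
  by rewrite mxE [X in _ + X]mxE MYZ // schur0 // subr0.
exists M1, (M2 + schur_term M y); split.
- by [].
- exact/psdD/psd_schur_term.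
- by rewrite addrA -defM subrK.
- move=> i y'; have [-> _|y'y y'Y] := eqVneq y' y; last by apply: M1Y; apply/setD1P.
  apply: (psd_diag0_col0 _ hM1); apply/eqP; rewrite eq_le psd_diag_ge0 // andbT.
  have := sub_schur_term_col0 y y hM; rewrite defM mxE => M1M2.
  by rewrite -M1M2 lerDl psd_diag_ge0.
- by move=> i j iZ; rewrite mxE M2Z // schur0 // addr0.
Qed.
End Split.

Section Submatrix.
Variables (R : realType) (m n : nat) (g : 'I_m -> 'I_n).
Local Notation sel := (rowsub g (1%:M : 'M[R]_n)).

Lemma mxsub_congr (M : 'M[R]_n) : mxsub g g M = sel *m M *m sel^T.
Proof.
by rewrite -[M in LHS]mulmx1 mxsub_mul -rowsubE -trmx1 -trmx_mxsub trmx1 rowsubE.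
Qed.

Lemma psd_mxsub (M : 'M[R]_n) : psd M -> psd (mxsub g g M).
Proof. by rewrite mxsub_congr -[sel in sel *m M]trmxK; apply: psd_congr. Qed.

Lemma psd_extend (N : 'M[R]_m) : psd N -> psd (sel^T *m N *m sel).
Proof. exact: psd_congr. Qed.

Hypothesis g_inj : injective g.

Lemma mxsub_extend (N : 'M[R]_m) : mxsub g g (sel^T *m N *m sel) = N.
Proof.
have selK : sel *m sel^T = 1%:M.
  rewrite -[sel in sel *m _]mulmx1 -mxsub_congr.
  by apply/matrixP => a b; rewrite !mxE (inj_eq g_inj).
by rewrite mxsub_congr !mulmxA selK mul1mx -mulmxA selK mulmx1.
Qed.

Lemma tr_sel_rowsub p (M : 'M[R]_(n, p)) :
  (forall i j, i \notin codom g -> M i j = 0) -> sel^T *m rowsub g M = M.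
Proof.
move=> M0; apply/matrixP => i j; rewrite !mxE.
have [/codomP [a ->]|gi] := boolP (i \in codom g).
  rewrite (bigD1 a) //= !mxE eqxx mul1r big1 ?addr0 // => b /negPf ba.
  by rewrite !mxE (inj_eq g_inj) ba mul0r.
rewrite M0 // big1 // => a _; rewrite !mxE.
by case: eqP => [gai|]; [rewrite -gai codom_f in gi | rewrite mul0r].
Qed.

Lemma psd_of_mxsub (M : 'M[R]_n) :
  (forall i j, i \notin codom g -> M i j = 0) ->
  (forall i j, j \notin codom g -> M i j = 0) ->
  psd (mxsub g g M) -> psd M.
Proof.
move=> M0r M0c /psd_extend; congr psd.
rewrite mxsub_congr !mulmxA -[_ *m _ *m M]mulmxA -rowsubE tr_sel_rowsub //.
apply: trmx_inj; rewrite !trmx_mul trmxK -rowsubE tr_sel_rowsub //.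
by move=> i j /M0c; rewrite mxE.
Qed.
End Submatrix.

Section Entrywise.
Variable R : realType.
Implicit Type f : R -> R.

Definition supported n (U : {set 'I_n}) (M : 'M[R]_n) :=
  forall i j, i \notin U -> M i j = 0.

Lemma supported_col n U (M : 'M[R]_n) i j :
  psd M -> supported U M -> j \notin U -> M i j = 0.
Proof. by move=> hM M0 jU; rewrite (psd_sym _ _ hM) M0. Qed.

Lemma mem_codom_enum_val n (U : {set 'I_n}) i :
  (i \in codom (enum_val : 'I_#|U| -> 'I_n)) = (i \in U).
Proof.
apply/codomP/idP => [[a ->]|iU]; first exact: enum_valP.
by exists (enum_rank_in iU i); rewrite enum_rankK_in.
Qed.

Lemma psd_of_enum_submx n (U : {set 'I_n}) (M : 'M[R]_n) :
  (forall i j, i \notin U -> M i j = 0 /\ M j i = 0) ->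
  psd (mxsub enum_val enum_val M : 'M_#|U|) -> psd M.
Proof.
move=> M0; apply: (psd_of_mxsub (@enum_val_inj _ U)).
  by move=> i j; rewrite mem_codom_enum_val => /(M0 i j) [].
by move=> i j; rewrite mem_codom_enum_val => /(M0 j i) [].
Qed.

Lemma psd_entrywise_of_component n (e : rel 'I_n) (U : {set 'I_n}) f (M : 'M[R]_n) :
  f 0 = 0 -> preserves_positivity f (induced e U) -> in_PH e M -> supported U M ->
  psd (entrywise f M).
Proof.
move=> f0 fU [hM Me] M0; apply: (psd_of_enum_submx (U := U)).
  by move=> i j iU; rewrite !mxE M0 // (supported_col _ hM M0) // f0.
rewrite /entrywise -map_mxsub; apply: (fU _ _).1.
split=> [|a b ab nab]; first exact: psd_mxsub.
by rewrite mxE Me // (inj_eq enum_val_inj).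
Qed.

Lemma superadditive_psd s t f : (t <= s)%N ->
  loewner_superadditive f (complete_graph s) ->
  forall A B : 'M[R]_t, psd A -> psd B ->
  psd (entrywise f (A + B) - entrywise f A - entrywise f B).
Proof.
move=> ts fsup A B hA hB; pose h := widen_ord ts.
have h_inj : injective h by move=> a b /(congr1 val) /= /val_inj.
pose ext (N : 'M[R]_t) := (rowsub h 1%:M)^T *m N *m rowsub h 1%:M.
have extK : forall N, mxsub h h (ext N) = N := mxsub_extend h_inj.
have ext_PH N : psd N -> in_PH (complete_graph s) (ext N).
  by move=> hN; split=> [|a b ab]; [exact: psd_extend | rewrite /complete_graph ab].
have := psd_mxsub h (fsup _ _ (ext_PH _ hA) (ext_PH _ hB)).1.
by rewrite /entrywise !raddfB /= -!map_mxsub raddfD /= !extK.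
Qed.

Lemma superadditive_psd_on n s (U V : {set 'I_n}) f (M1 M2 : 'M[R]_n) :
  f 0 = 0 -> (#|U :&: V| <= s)%N -> loewner_superadditive f (complete_graph s) ->
  psd M1 -> psd M2 -> supported U M1 -> supported V M2 ->
  psd (entrywise f (M1 + M2) - entrywise f M1 - entrywise f M2).
Proof.
move=> f0 UVs fsup hM1 hM2 M1U M2V; apply: (psd_of_enum_submx (U := U :&: V)).
  have D0 i j : M1 i j = 0 \/ M2 i j = 0 ->
      (entrywise f (M1 + M2) - entrywise f M1 - entrywise f M2) i j = 0.
    by rewrite !mxE; case=> ->; rewrite f0 ?add0r ?addr0 ?subr0 subrr.
  move=> i j; rewrite inE negb_and => /orP [iU|iV]; split; apply: D0.
  - by left; apply: M1U.
  - by left; apply: (supported_col _ hM1 M1U).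
  - by right; apply: M2V.
  - by right; apply: (supported_col _ hM2 M2V).
rewrite /entrywise !raddfB /= -!map_mxsub raddfD /=.
by apply: (superadditive_psd UVs fsup); apply: psd_mxsub.
Qed.
End Entrywise.

Section Components.
Variables (n : nat) (e : rel 'I_n).
Hypothesis e_sym : symmetric e.

Lemma prime_comps_cover W P : prime_comps e W P ->
  forall x, x \in W -> exists2 B, B \in P & x \in B.
Proof.
elim=> [W0 _ | W0 A C B P1 P2 [defW _ _ _ _] _ IH1 _ IH2] x xW.
  by exists W0; rewrite ?inE.
have : (x \in A :|: C) || (x \in B :|: C).
  by move: xW; rewrite -defW !inE; case/orP => [/orP [] | ] ->; rewrite ?orbT.
case/orP => [/IH1 [B0 B0P xB0] | /IH2 [B0 B0P xB0]]; exists B0 => //.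
  by rewrite inE B0P.
by rewrite inE B0P orbT.
Qed.

Lemma prime_comps_edge W P : prime_comps e W P ->
  forall x y, x \in W -> y \in W -> e x y -> exists2 B, B \in P & (x \in B) && (y \in B).
Proof.
elim=> [W0 _ | W0 A C B P1 P2 [defW [AC0 [AB0 CB0]] _ _ [sepW _]] _ IH1 _ IH2] x y xW yW exy.
  by exists W0; rewrite ?inE ?xW ?yW.
have notAB u v : u \in W0 -> v \in W0 -> u \in A -> v \in B -> ~~ e u v.
  move=> uW vW uA vB; apply/negP => euv.
  have := sepW u [:: v] uA vB; rewrite /= euv uW vW !orbF => /(_ isT isT) /orP [uC|vC].
    by move/setP/(_ u): AC0; rewrite !inE uA uC.
  by move/setP/(_ v): CB0; rewrite !inE vB vC.
have inAC u : u \in W0 -> u \notin B -> u \in A :|: C.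
  by rewrite -defW !inE => /orP [] -> //; rewrite orbT.
have inBC u : u \in W0 -> u \notin A -> u \in B :|: C.
  by rewrite -defW !inE; case: (u \in A) => //= /orP [] ->; rewrite ?orbT.
have [xA|xA] := boolP (x \in A).
  have yB : y \notin B by apply: contraL exy; apply: notAB.
  have [|B0 B0P xyB0] := IH1 x y _ (inAC y yW yB) exy; first by rewrite inE xA.
  by exists B0; rewrite // inE B0P.
have [yA|yA] := boolP (y \in A).
  have xB : x \notin B by apply: contraL exy; rewrite e_sym; apply: notAB.
  have [|B0 B0P xyB0] := IH1 x y (inAC x xW xB) _ exy; first by rewrite inE yA.
  by exists B0; rewrite // inE B0P.
have [B0 B0P xyB0] := IH2 x y (inBC x xW xA) (inBC y yW yA) exy.
by exists B0; rewrite // inE B0P orbT.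
Qed.

Variable Bs : seq {set 'I_n}.
Local Notation Bn i := (nth set0 Bs i).

Lemma HsetP j x : reflect (exists2 i, (i < j)%N & x \in Bn i) (x \in Hset Bs j).
Proof.
apply: (iffP bigcupP) => [[i _ xi]|[i lt xi]]; first by exists i.
by exists (Ordinal lt).
Qed.

Lemma HsetS j : Hset Bs j.+1 = Hset Bs j :|: Bn j.
Proof. by rewrite /Hset big_ord_recr. Qed.

Hypothesis Bs_comps : prime_comps e [set: 'I_n] [set B | B \in Bs].

Lemma mem_Hset_size x : x \in Hset Bs (size Bs).
Proof.
have [B] := prime_comps_cover Bs_comps (in_setT x); rewrite inE => BBs xB.
by apply/HsetP; exists (index B Bs); rewrite ?index_mem ?nth_index.
Qed.

Lemma edge_in_nth x y : e x y ->
  exists2 l, (l < size Bs)%N & (x \in Bn l) && (y \in Bn l).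
Proof.
move=> exy; have [B] := prime_comps_edge Bs_comps (in_setT x) (in_setT y) exy.
by rewrite inE => BBs xyB; exists (index B Bs); rewrite ?index_mem ?nth_index.
Qed.

Hypothesis Bs_perfect : perfect_ordering e Bs.

(* Take the first component containing the edge: its separator lies in an
   earlier component, which then also contains the edge. *)
Lemma perfect_ordering_no_edge j x y :
  x \in Hset Bs j -> x \notin Bn j -> y \in Bn j -> y \notin Hset Bs j -> ~~ e x y.
Proof.
move=> xH xB yB yH; apply/negP => exy.
have ex : exists l, [&& (l < size Bs)%N, x \in Bn l & y \in Bn l].
  by have [l ls /andP [xl yl]] := edge_in_nth exy; exists l; rewrite ls xl yl.
have [l /and3P [ls xl yl] lmin] := ex_minnP ex.
have [lj|] := ltnP l j; first by case/negP: yH; apply/HsetP; exists l.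
rewrite leq_eqVlt => /orP [/eqP jl|jl]; first by rewrite jl xl in xB.
have [m ml Sl_m] : exists2 m, (m < l)%N & Sset Bs l \subset Bn m.
  by apply: Bs_perfect.1; rewrite ls andbT (leq_ltn_trans (leq0n j) jl).
have inSl z : z \in Hset Bs l -> z \in Bn l -> z \in Bn m.
  by move=> zH zl; apply: (subsetP Sl_m); rewrite inE zH zl.
have xm : x \in Bn m.
  apply: inSl xl; case/HsetP: xH => i ij xi.
  by apply/HsetP; exists i; first exact: ltn_trans jl.
have ym : y \in Bn m by apply: inSl yl; apply/HsetP; exists j.
have ms : (m < size Bs)%N.
  by rewrite ltnNge; apply: contraL xm => /(nth_default set0) ->; rewrite inE.
by move: (lmin m); rewrite ms xm ym leqNgt ml => /(_ isT).
Qed.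
End Components.

Section Induction.
Variables (R : realType) (n : nat) (e : rel 'I_n) (Bs : seq {set 'I_n}).
Variables (f : R -> R) (s : nat).
Hypotheses (e_sym : symmetric e)
  (Bs_comps : prime_comps e [set: 'I_n] [set B | B \in Bs])
  (Bs_perfect : perfect_ordering e Bs) (f0 : f 0 = 0)
  (Sset_le : forall i, (i < size Bs)%N -> (#|Sset Bs i| <= s)%N)
  (f_comp : forall i, (i < size Bs)%N -> preserves_positivity f (induced e (nth set0 Bs i)))
  (f_sup : loewner_superadditive f (complete_graph s)).

Lemma split_at_component j (N : 'M[R]_n) : (j < size Bs)%N ->
  in_PH e N -> supported (Hset Bs j.+1) N ->
  exists M1, exists M2, [/\ N = M1 + M2, in_PH e M1, supported (Hset Bs j) M1,
    in_PH e M2 & supported (nth set0 Bs j) M2].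
Proof.
move=> js [hN Ne] N0; set B := nth set0 Bs j; set H := Hset Bs j.
have N_YB i y : y \in B :\: H -> i \notin B -> N i y = 0.
  move=> /setDP [yB yH] iB; have [iH|iH] := boolP (i \in H).
    apply: Ne; first by apply: contraNneq iB => ->.
    exact: (perfect_ordering_no_edge e_sym Bs_comps Bs_perfect iH iB yB yH).
  by apply: (N0 i y); rewrite HsetS inE negb_or iH.
have [M1 [M2 [hM1 hM2 defN M1Y M2B]]] := psd_split (subsetDl B H) hN N_YB.
have NE i k : N i k = M1 i k + M2 i k by rewrite defN mxE.
have offS i k : i \notin Sset Bs j -> M1 i k = 0 \/ M2 i k = 0.
  have [iB|iB _] := boolP (i \in B); last by right; apply: M2B.
  rewrite /Sset inE iB andbT => iH.
  by left; rewrite (psd_sym _ _ hM1) M1Y // inE iB iH.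
have off_e i k : i != k -> ~~ e i k -> M1 i k = 0 /\ M2 i k = 0.
  move=> ik nik; have := Ne i k ik nik.
  wlog iS : i k ik nik / i \notin Sset Bs j => [hw|].
    have [iS|iS] := boolP (i \in Sset Bs j); last exact: hw.
    have [kS|kS] := boolP (k \in Sset Bs j).
      by case/negP: nik; apply: (Bs_perfect.2 j js).
    rewrite (psd_sym _ _ hM1) (psd_sym _ _ hM2) (psd_sym _ _ hN).
    by apply: hw; rewrite 1?eq_sym 1?e_sym.
  by rewrite NE; case: (offS i k iS) => ->; rewrite ?add0r ?addr0 => ->.
exists M1, M2; split=> //.
- by split=> // i k ik nik; case: (off_e i k ik nik).
- move=> i k iH; have [iB|iB] := boolP (i \in B).
    by rewrite (psd_sym _ _ hM1) M1Y // inE iB iH.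
  by have := N0 i k; rewrite NE M2B // addr0 => ->; rewrite // HsetS inE negb_or iH.
- by split=> // i k ik nik; case: (off_e i k ik nik).
Qed.

Lemma psd_entrywise_supported j (N : 'M[R]_n) : (j <= size Bs)%N ->
  in_PH e N -> supported (Hset Bs j) N -> psd (entrywise f N).
Proof.
elim: j N => [|j IH] N js hN N0.
  have -> : N = 0 by apply/matrixP => i k; rewrite mxE N0 //; apply/HsetP => -[].
  have -> : entrywise f 0 = 0 :> 'M_n by apply/matrixP => i k; rewrite !mxE f0.
  exact: psd0.
have [M1 [M2 [defN hM1 M1H hM2 M2B]]] := split_at_component js hN N0.
have -> : entrywise f N =
    (entrywise f (M1 + M2) - entrywise f M1 - entrywise f M2)
    + (entrywise f M1 + entrywise f M2).
  by rewrite defN -[_ - _ - _]addrA -opprD subrK.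
apply: psdD; last apply: psdD.
- exact: superadditive_psd_on f0 (Sset_le js) f_sup hM1.1 hM2.1 M1H M2B.
- exact: IH (ltnW js) hM1 M1H.
- exact: psd_entrywise_of_component f0 (f_comp js) hM2 M2B.
Qed.
End Induction.

Theorem theorem4p1 (R : realType) (n : nat) (e : rel 'I_n)
  (e_sym : symmetric e) (e_irr : irreflexive e)
  (Bs : seq {set 'I_n})
  (Bs_uniq : uniq Bs)
  (Bs_comps : prime_comps e [set: 'I_n] [set B | B \in Bs])
  (Bs_perfect : perfect_ordering e Bs)
  (f : R -> R) (f0 : f 0 = 0) :
  let s := (\max_(i < size Bs) #|Sset Bs i|)%N in
  (forall i, (i < size Bs)%N ->
     preserves_positivity f (induced e (nth set0 Bs i))) ->
  loewner_superadditive f (complete_graph s) ->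
  preserves_positivity f e.
Proof.
move=> s f_comp f_sup M hM; split; last by move=> i k ik nik; rewrite mxE hM.2 // f0.
have Sset_le i : (i < size Bs)%N -> (#|Sset Bs i| <= s)%N.
  by move=> i_lt; apply: (leq_bigmax (Ordinal i_lt)).
apply: (psd_entrywise_supported e_sym Bs_comps Bs_perfect f0 Sset_le f_comp f_sup
  (leqnn (size Bs)) hM).
by move=> i k; rewrite (mem_Hset_size Bs_comps).
Qed.
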